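(* Let $\mathcal C$ have a right duality, let $(A,m,\eta,\Delta,\epsilon)$ be a Frobenius algebra in $\mathcal C$ with an $A$-swap $(\tilde c_X)_X$, and assume $A$ is swap-commutative. Then the morphism $\Phi:=(\epsilon\otimes\mathrm{id}_{A^\vee})\circ(m\otimes\mathrm{id}_{A^\vee})\circ(\mathrm{id}_A\otimes b_A)$ lies in $\mathrm{Hom}_A(A,A^\vee)$, where $A=(A,m)$ and $A^\vee$ is the dual module of $A$, and $\Phi$ is an isomorphism of $A$-modules. Thus $A$ is self-dual as an $A$-module.
   Context: Throughout, $\mathcal C$ is a strict tensor (monoidal) category with tensor unit $I$ which is abelian and whose tensor product of morphisms is $k$-additive in each factor, where $k:=\mathrm{Hom}(I,I)$ is the (commutative) ground ring. An algebra in $\mathcal C$ is a triple $(A,m,\eta)$ with $A$ an object, $m\in\mathrm{Hom}(A\otimes A,A)$, $\eta\in\mathrm{Hom}(I,A)$, such that $m\circ(\mathrm{id}_A\otimes m)=m\circ(m\otimes\mathrm{id}_A)$ and $m\circ(\mathrm{id}_A\otimes\eta)=\mathrm{id}_A=m\circ(\eta\otimes\mathrm{id}_A)$. A coalgebra is a triple $(A,\Delta,\epsilon)$ with $\Delta\in\mathrm{Hom}(A,A\otimes A)$, $\epsilon\in\mathrm{Hom}(A,I)$, $(\Delta\otimes\mathrm{id}_A)\circ\Delta=(\mathrm{id}_A\otimes\Delta)\circ\Delta$ and $(\mathrm{id}_A\otimes\epsilon)\circ\Delta=\mathrm{id}_A=(\epsilon\otimes\mathrm{id}_A)\circ\Delta$.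 A Frobenius algebra is a quintuple $(A,m,\eta,\Delta,\epsilon)$ such that $(A,m,\eta)$ is an algebra, $(A,\Delta,\epsilon)$ a coalgebra, and $(\mathrm{id}_A\otimes m)\circ(\Delta\otimes\mathrm{id}_A)=\Delta\circ m=(m\otimes\mathrm{id}_A)\circ(\mathrm{id}_A\otimes\Delta)$. A (left) $A$-module is a pair $M=(\dot M,\rho_M)$ with $\rho_M\in\mathrm{Hom}(A\otimes\dot M,\dot M)$, $\rho_M\circ(m\otimes\mathrm{id}_{\dot M})=\rho_M\circ(\mathrm{id}_A\otimes\rho_M)$, $\rho_M\circ(\eta\otimes\mathrm{id}_{\dot M})=\mathrm{id}_{\dot M}$; $\mathrm{Hom}_A(M,N):=\{f\in\mathrm{Hom}(\dot M,\dot N)\mid f\circ\rho_M=\rho_N\circ(\mathrm{id}_A\otimes f)\}$. A right duality assigns to each object $X$ an object $X^\vee$ and morphisms $b_X\in\mathrm{Hom}(I,X\otimes X^\vee)$, $d_X\in\mathrm{Hom}(X^\vee\otimes X,I)$ with $(\mathrm{id}_X\otimes d_X)\circ(b_X\otimes\mathrm{id}_X)=\mathrm{id}_X$ and $(d_X\otimes\mathrm{id}_{X^\vee})\circ(\mathrm{id}_{X^\vee}\otimes b_X)=\mathrm{id}_{X^\vee}$. An $A$-swap is a family of isomorphisms $\tilde c_X\in\mathrm{Hom}(X\otimes A,A\otimes X)$, one for each object $X$, such that for all objects $X,Y$: $(m\otimes\mathrm{id}_X)\circ(\mathrm{id}_A\otimes\tilde c_X)\circ(\tilde c_X\otimes\mathrm{id}_A)=\tilde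 c_X\circ(\mathrm{id}_X\otimes m)$, $\tilde c_X\circ(\mathrm{id}_X\otimes\eta)=\eta\otimes\mathrm{id}_X$, $\tilde c_{X\otimes Y}=(\tilde c_X\otimes\mathrm{id}_Y)\circ(\mathrm{id}_X\otimes\tilde c_Y)$, and $\tilde c_Y\circ(f\otimes g)=(g\otimes f)\circ\tilde c_X$ for all $f\in\mathrm{Hom}(X,Y)$, $g\in\mathrm{Hom}(A,A)$. The algebra $A$ is swap-commutative if $m\circ\tilde c_A=m$. Dual module: for a left $A$-module $M$, $M^\vee:=(\dot M^\vee,\rho_M^\wedge)$ with $\rho_M^\wedge:=(d_{\dot M}\otimes\mathrm{id}_{\dot M^\vee})\circ(\mathrm{id}_{\dot M^\vee}\otimes\rho_M\otimes\mathrm{id}_{\dot M^\vee})\circ((\tilde c_{\dot M^\vee})^{-1}\otimes b_{\dot M})\in\mathrm{Hom}(A\otimes\dot M^\vee,\dot M^\vee)$; this is a left $A$-module. *)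

From HB Require Import structures.
From mathcomp Require Import all_boot all_algebra.
Set Implicit Arguments. Unset Strict Implicit. Unset Printing Implicit Defensive.
Import GRing.Theory.
Local Open Scope ring_scope.

Record stcat := STCat {
  Ob :> Type;
  HomC : Ob -> Ob -> zmodType;
  compm : forall X Y Z : Ob, HomC Y Z -> HomC X Y -> HomC X Z;
  idm : forall X : Ob, HomC X X;
  tens : Ob -> Ob -> Ob;
  tensm : forall X X' Y Y' : Ob, HomC X X' -> HomC Y Y' -> HomC (tens X Y) (tens X' Y');
  tunit : Ob;
  tensA : forall X Y Z : Ob, tens (tens X Y) Z = tens X (tens Y Z);
  tens1l : forall X : Ob, tens tunit X = X;
  tens1r : forall X : Ob, tens X tunit = X
}.
Arguments HomC : clear implicits.
Arguments compm {s X Y Z}.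
Arguments idm {s}.
Arguments tens {s}.
Arguments tensm {s X X' Y Y'}.
Arguments tunit {s}.
Arguments tensA {s}.
Arguments tens1l {s}.
Arguments tens1r {s}.

Declare Scope cat_scope.
Delimit Scope cat_scope with cat.
Notation "g ∘ f" := (compm g f) (at level 40, left associativity) : cat_scope.
Notation "f ⊗ g" := (tensm f g) (at level 35, no associativity) : cat_scope.
Local Open Scope cat_scope.

(* The identity morphism transported along an equality of objects: this is how
   the (identity) strictness isomorphisms X⊗(Y⊗Z) = (X⊗Y)⊗Z etc. are written. *)
Definition eqHom (C : stcat) (X Y : Ob C) (e : X = Y) : HomC C X Y :=
  match e in _ = Y' return HomC C X Y' with erefl => idm X end.
Arguments eqHom {C X Y}.

Definition is_stcat (C : stcat) : Prop :=
  [/\ (forall (X Y Z W : C) (h : HomC C Z W) (g : HomC C Y Z) (f : HomC C X Y),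
        h ∘ (g ∘ f) = (h ∘ g) ∘ f)
    /\ (forall (X Y : C) (f : HomC C X Y), idm Y ∘ f = f /\ f ∘ idm X = f),
      (forall (X Y Z X' Y' Z' : C) (f : HomC C X Y) (g : HomC C Y Z)
              (f' : HomC C X' Y') (g' : HomC C Y' Z'),
        (g ∘ f) ⊗ (g' ∘ f') = (g ⊗ g') ∘ (f ⊗ f')),
      (forall X Y : C, idm X ⊗ idm Y = idm (tens X Y)),
      (forall (X X' Y Y' Z Z' : C) (f : HomC C X X') (g : HomC C Y Y') (h : HomC C Z Z'),
        eqHom (tensA X' Y' Z') ∘ ((f ⊗ g) ⊗ h) = (f ⊗ (g ⊗ h)) ∘ eqHom (tensA X Y Z))
    & (forall (X Y : C) (f : HomC C X Y),
        eqHom (tens1l Y) ∘ (idm tunit ⊗ f) = f ∘ eqHom (tens1l X)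
        /\ eqHom (tens1r Y) ∘ (f ⊗ idm tunit) = f ∘ eqHom (tens1r X))
      /\
      (forall (X Y Z : C) (f f' : HomC C Y Z) (g g' : HomC C X Y),
        (f + f') ∘ g = f ∘ g + f' ∘ g /\ f ∘ (g + g') = f ∘ g + f ∘ g')
      /\ (forall (X Y X' Y' : C) (f f' : HomC C X X') (g g' : HomC C Y Y'),
        (f + f') ⊗ g = f ⊗ g + f' ⊗ g /\ f ⊗ (g + g') = f ⊗ g + f ⊗ g')].

Definition is_mono (C : stcat) (X Y : C) (f : HomC C X Y) : Prop :=
  forall (W : C) (g h : HomC C W X), f ∘ g = f ∘ h -> g = h.
Definition is_epi (C : stcat) (X Y : C) (f : HomC C X Y) : Prop :=
  forall (W : C) (g h : HomC C Y W), g ∘ f = h ∘ f -> g = h.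

Definition is_kernel (C : stcat) (X Y K : C) (f : HomC C X Y) (k : HomC C K X) : Prop :=
  f ∘ k = 0 /\
  forall (W : C) (g : HomC C W X), f ∘ g = 0 ->
    exists u : HomC C W K, k ∘ u = g /\ forall u' : HomC C W K, k ∘ u' = g -> u' = u.

Definition is_cokernel (C : stcat) (X Y Q : C) (f : HomC C X Y) (q : HomC C Y Q) : Prop :=
  q ∘ f = 0 /\
  forall (W : C) (g : HomC C Y W), g ∘ f = 0 ->
    exists u : HomC C Q W, u ∘ q = g /\ forall u' : HomC C Q W, u' ∘ q = g -> u' = u.

Definition is_abelian (C : stcat) : Prop :=
  [/\ (exists Z : C, forall X : C,
         (forall f g : HomC C Z X, f = g) /\ (forall f g : HomC C X Z, f = g)),
      (forall X1 X2 : C, exists (P : C) (i1 : HomC C X1 P) (i2 : HomC C X2 P)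
                                (p1 : HomC C P X1) (p2 : HomC C P X2),
         [/\ p1 ∘ i1 = idm X1, p2 ∘ i2 = idm X2, p1 ∘ i2 = 0, p2 ∘ i1 = 0
           & i1 ∘ p1 + i2 ∘ p2 = idm P]),
      (forall (X Y : C) (f : HomC C X Y), exists (K : C) (k : HomC C K X), is_kernel f k)
    & (forall (X Y : C) (f : HomC C X Y), exists (Q : C) (q : HomC C Y Q), is_cokernel f q)
      /\
      (forall (X Y : C) (f : HomC C X Y), is_mono f ->
         exists (Z : C) (g : HomC C Y Z), is_kernel g f)
      /\ (forall (X Y : C) (f : HomC C X Y), is_epi f ->
         exists (Z : C) (g : HomC C Z X), is_cokernel g f)].

Definition kscale (C : stcat) (X Y : C) (lam : HomC C tunit tunit) (f : HomC C X Y) : HomC C X Y :=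
  eqHom (tens1l Y) ∘ (lam ⊗ f) ∘ eqHom (esym (tens1l X)).

Definition tensor_k_additive (C : stcat) : Prop :=
  forall (X X' Y Y' : C) (lam : HomC C tunit tunit) (f : HomC C X X') (g : HomC C Y Y'),
    kscale lam f ⊗ g = kscale lam (f ⊗ g) /\ f ⊗ kscale lam g = kscale lam (f ⊗ g).

Record rduality (C : stcat) := RDuality {
  dualo : C -> C;
  coev : forall X : C, HomC C tunit (tens X (dualo X));
  ev : forall X : C, HomC C (tens (dualo X) X) tunit
}.
Arguments dualo {C}.
Arguments coev {C}.
Arguments ev {C}.

Definition is_rduality (C : stcat) (D : rduality C) : Prop :=
  forall X : C,
    eqHom (tens1r X) ∘ (idm X ⊗ ev D X) ∘ eqHom (tensA X (dualo D X) X)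
      ∘ (coev D X ⊗ idm X) ∘ eqHom (esym (tens1l X)) = idm X
    /\
    eqHom (tens1l (dualo D X)) ∘ (ev D X ⊗ idm (dualo D X))
      ∘ eqHom (esym (tensA (dualo D X) X (dualo D X)))
      ∘ (idm (dualo D X) ⊗ coev D X) ∘ eqHom (esym (tens1r (dualo D X)))
      = idm (dualo D X).

Definition is_algebra (C : stcat) (A : C) (m : HomC C (tens A A) A) (eta : HomC C tunit A) : Prop :=
  [/\ m ∘ (idm A ⊗ m) ∘ eqHom (tensA A A A) = m ∘ (m ⊗ idm A),
      m ∘ (idm A ⊗ eta) ∘ eqHom (esym (tens1r A)) = idm A
    & m ∘ (eta ⊗ idm A) ∘ eqHom (esym (tens1l A)) = idm A].

Definition is_coalgebra (C : stcat) (A : C) (Delta : HomC C A (tens A A)) (eps : HomC C A tunit) : Prop :=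
  [/\ eqHom (tensA A A A) ∘ (Delta ⊗ idm A) ∘ Delta = (idm A ⊗ Delta) ∘ Delta,
      eqHom (tens1r A) ∘ (idm A ⊗ eps) ∘ Delta = idm A
    & eqHom (tens1l A) ∘ (eps ⊗ idm A) ∘ Delta = idm A].

Definition is_frobenius (C : stcat) (A : C) (m : HomC C (tens A A) A) (eta : HomC C tunit A)
    (Delta : HomC C A (tens A A)) (eps : HomC C A tunit) : Prop :=
  [/\ is_algebra m eta, is_coalgebra Delta eps,
      (idm A ⊗ m) ∘ eqHom (tensA A A A) ∘ (Delta ⊗ idm A) = Delta ∘ m
    & Delta ∘ m = (m ⊗ idm A) ∘ eqHom (esym (tensA A A A)) ∘ (idm A ⊗ Delta)].

Definition is_module (C : stcat) (A : C) (m : HomC C (tens A A) A) (eta : HomC C tunit A)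
    (M : C) (rho : HomC C (tens A M) M) : Prop :=
  rho ∘ (m ⊗ idm M) = rho ∘ (idm A ⊗ rho) ∘ eqHom (tensA A A M)
  /\ rho ∘ (eta ⊗ idm M) ∘ eqHom (esym (tens1l M)) = idm M.

Definition is_modhom (C : stcat) (A M N : C) (rhoM : HomC C (tens A M) M)
    (rhoN : HomC C (tens A N) N) (f : HomC C M N) : Prop :=
  f ∘ rhoM = rhoN ∘ (idm A ⊗ f).

Definition is_Aswap (C : stcat) (A : C) (m : HomC C (tens A A) A) (eta : HomC C tunit A)
    (c : forall X : C, HomC C (tens X A) (tens A X))
    (cinv : forall X : C, HomC C (tens A X) (tens X A)) : Prop :=
  [/\ (forall X : C, cinv X ∘ c X = idm (tens X A) /\ c X ∘ cinv X = idm (tens A X)),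
      (forall X : C,
         (m ⊗ idm X) ∘ eqHom (esym (tensA A A X)) ∘ (idm A ⊗ c X)
           ∘ eqHom (tensA A X A) ∘ (c X ⊗ idm A)
         = c X ∘ (idm X ⊗ m) ∘ eqHom (tensA X A A)),
      (forall X : C,
         c X ∘ (idm X ⊗ eta) ∘ eqHom (esym (tens1r X))
         = (eta ⊗ idm X) ∘ eqHom (esym (tens1l X))),
      (forall X Y : C,
         c (tens X Y)
         = eqHom (tensA A X Y) ∘ (c X ⊗ idm Y) ∘ eqHom (esym (tensA X A Y))
             ∘ (idm X ⊗ c Y) ∘ eqHom (tensA X Y A))
    & (forall (X Y : C) (f : HomC C X Y) (g : HomC C A A),
         c Y ∘ (f ⊗ g) = (g ⊗ f) ∘ c X)].

Definition swap_commutative (C : stcat) (A : C) (m : HomC C (tens A A) A)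
    (c : forall X : C, HomC C (tens X A) (tens A X)) : Prop :=
  m ∘ c A = m.

(* rho^wedge := (d ⊗ id) ∘ (id ⊗ rho ⊗ id) ∘ (cinv_{M^v} ⊗ b_M), with the
   strictness identifications made explicit. *)
Definition dual_act (C : stcat) (D : rduality C) (A : C)
    (cinv : forall X : C, HomC C (tens A X) (tens X A))
    (M : C) (rho : HomC C (tens A M) M) : HomC C (tens A (dualo D M)) (dualo D M) :=
  let Mv := dualo D M in
  eqHom (tens1l Mv) ∘ (ev D M ⊗ idm Mv) ∘ ((idm Mv ⊗ rho) ⊗ idm Mv)
    ∘ eqHom (eq_trans (esym (tensA (tens Mv A) M Mv))
                      (f_equal (fun Z => tens Z Mv) (tensA Mv A M)))
    ∘ (cinv Mv ⊗ coev D M) ∘ eqHom (esym (tens1r (tens A Mv))).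

Definition Phi (C : stcat) (D : rduality C) (A : C) (m : HomC C (tens A A) A)
    (eps : HomC C A tunit) : HomC C A (dualo D A) :=
  eqHom (tens1l (dualo D A)) ∘ (eps ⊗ idm (dualo D A)) ∘ (m ⊗ idm (dualo D A))
    ∘ eqHom (esym (tensA A A (dualo D A))) ∘ (idm A ⊗ coev D A)
    ∘ eqHom (esym (tens1r A)).

(** For a pairing [g : X ⊗ A → I] let [mate g : X → A^∨] be its transpose
   under the duality, and for a copairing [u : I → A ⊗ X] let
   [comate u : A^∨ → X] be [(d_A ⊗ id) ∘ (id ⊗ u)].  When [g] and [u] satisfy
   both snake identities, [mate g] and [comate u] are mutually inverse.  For a
   Frobenius algebra the pairing [ε ∘ m] and the copairing [Δ ∘ η] are such a
   pair, and [Φ = mate (ε ∘ m)].  The dual action is itself a mate, so [Φ] is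
   A-linear once [Φ] is moved through [c̃^{-1}] by naturality and the swap is
   absorbed by the multiplication ([m ∘ c̃_A = m] gives [m ∘ c̃_A^{-1} = m]);
   the inverse of an A-linear isomorphism is A-linear. *)
From mathcomp Require Import all_boot all_algebra.
From Stdlib Require Import ProofIrrelevance.
Set Implicit Arguments. Unset Strict Implicit.
Local Open Scope cat_scope.

Section StrictTensorCategory.
Variable C : stcat.
Hypothesis HC : is_stcat C.

Lemma compmA (X Y Z W : C) (h : HomC C Z W) (g : HomC C Y Z) (f : HomC C X Y) :
  h ∘ (g ∘ f) = h ∘ g ∘ f.
Proof. by case: HC => [[H _]] *; apply: H. Qed.

Lemma comp1m (X Y : C) (f : HomC C X Y) : idm Y ∘ f = f.
Proof. by case: HC => [[_ H]] *; case: (H _ _ f). Qed.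

Lemma compm1 (X Y : C) (f : HomC C X Y) : f ∘ idm X = f.
Proof. by case: HC => [[_ H]] *; case: (H _ _ f). Qed.

Lemma tensm_comp (X Y Z X' Y' Z' : C) (f : HomC C X Y) (g : HomC C Y Z)
    (f' : HomC C X' Y') (g' : HomC C Y' Z') :
  (g ∘ f) ⊗ (g' ∘ f') = (g ⊗ g') ∘ (f ⊗ f').
Proof. by case: HC => _ H *; apply: H. Qed.

Lemma tensm1 (X Y : C) : idm X ⊗ idm Y = idm (tens X Y).
Proof. by case: HC => _ _ H *; apply: H. Qed.

Lemma assoc_nat (X X' Y Y' Z Z' : C) (f : HomC C X X') (g : HomC C Y Y')
    (h : HomC C Z Z') :
  eqHom (tensA X' Y' Z') ∘ ((f ⊗ g) ⊗ h) = (f ⊗ (g ⊗ h)) ∘ eqHom (tensA X Y Z).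
Proof. by case: HC => _ _ _ H *; apply: H. Qed.

Lemma lunit_nat (X Y : C) (f : HomC C X Y) :
  eqHom (tens1l Y) ∘ (idm tunit ⊗ f) = f ∘ eqHom (tens1l X).
Proof. by case: HC => _ _ _ _ [H _] *; case: (H _ _ f). Qed.

Lemma runit_nat (X Y : C) (f : HomC C X Y) :
  eqHom (tens1r Y) ∘ (f ⊗ idm tunit) = f ∘ eqHom (tens1r X).
Proof. by case: HC => _ _ _ _ [H _] *; case: (H _ _ f). Qed.

Lemma postcomp2 (X Y Z : C) (a : HomC C Y Z) (b : HomC C X Y) (r : HomC C X Z) :
  a ∘ b = r -> forall W (k : HomC C Z W), k ∘ a ∘ b = k ∘ r.
Proof. by move=> H W k; rewrite -compmA H. Qed.

Lemma postcomp22 (X Y Y' Z : C) (a : HomC C Y Z) (b : HomC C X Y)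
    (c : HomC C Y' Z) (d : HomC C X Y') :
  a ∘ b = c ∘ d -> forall W (k : HomC C Z W), k ∘ a ∘ b = k ∘ c ∘ d.
Proof. by move=> H W k; rewrite -!compmA H. Qed.

Lemma postcomp3 (X Y Z V : C) (a : HomC C Z V) (a' : HomC C Y Z) (b : HomC C X Y)
    (r : HomC C X V) :
  a ∘ a' ∘ b = r -> forall W (k : HomC C V W), k ∘ a ∘ a' ∘ b = k ∘ r.
Proof. by move=> H W k; rewrite -H !compmA. Qed.

Lemma tensm_compl (X Y Z W : C) (f : HomC C X Y) (g : HomC C Y Z) :
  (g ∘ f) ⊗ idm W = (g ⊗ idm W) ∘ (f ⊗ idm W).
Proof. by rewrite -tensm_comp comp1m. Qed.

Lemma tensm_compr (X Y Z W : C) (f : HomC C X Y) (g : HomC C Y Z) :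
  idm W ⊗ (g ∘ f) = (idm W ⊗ g) ∘ (idm W ⊗ f).
Proof. by rewrite -tensm_comp comp1m. Qed.

Lemma tensm_factor_lr (X X' Y Y' : C) (f : HomC C X X') (g : HomC C Y Y') :
  (f ⊗ idm Y') ∘ (idm X ⊗ g) = f ⊗ g.
Proof. by rewrite -tensm_comp comp1m compm1. Qed.

Lemma tensm_factor_rl (X X' Y Y' : C) (f : HomC C X X') (g : HomC C Y Y') :
  (idm X' ⊗ g) ∘ (f ⊗ idm Y) = f ⊗ g.
Proof. by rewrite -tensm_comp comp1m compm1. Qed.

Lemma eqHom_irr (X Y : C) (e1 e2 : X = Y) : eqHom e1 = eqHom e2.
Proof. by rewrite (proof_irrelevance _ e1 e2). Qed.

Lemma eqHom_trans (X Y Z : C) (e1 : X = Y) (e2 : Y = Z) :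
  eqHom e2 ∘ eqHom e1 = eqHom (eq_trans e1 e2).
Proof. by case: Z / e2; rewrite /= comp1m; apply: eqHom_irr. Qed.

Lemma eqHom_transl (X Y Z W : C) (e1 : X = Y) (e2 : Y = Z) (k : HomC C Z W) :
  k ∘ eqHom e2 ∘ eqHom e1 = k ∘ eqHom (eq_trans e1 e2).
Proof. by rewrite -compmA eqHom_trans. Qed.

Lemma eqHom_split (X Y Z : C) (e : X = Z) (e1 : X = Y) (e2 : Y = Z) :
  eqHom e = eqHom e2 ∘ eqHom e1.
Proof. by rewrite eqHom_trans; apply: eqHom_irr. Qed.

Lemma eqHomK (X Y : C) (e : X = Y) : eqHom (esym e) ∘ eqHom e = idm X.
Proof. by case: Y / e; rewrite /= comp1m. Qed.

Lemma eqHomVK (X Y : C) (e : X = Y) : eqHom e ∘ eqHom (esym e) = idm Y.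
Proof. by case: Y / e; rewrite /= comp1m. Qed.

Lemma eqHom_tensl (X Y W : C) (e : X = Y) :
  eqHom e ⊗ idm W = eqHom (f_equal (fun Z => tens Z W) e).
Proof. by case: Y / e; rewrite /= tensm1. Qed.

Lemma eqHom_tensr (X Y W : C) (e : X = Y) :
  idm W ⊗ eqHom e = eqHom (f_equal (tens W) e).
Proof. by case: Y / e; rewrite /= tensm1. Qed.

Lemma eqHom_tensrE (W P Q : C) (e : tens W P = tens W Q) (e' : P = Q) :
  eqHom e = idm W ⊗ eqHom e'.
Proof. by rewrite eqHom_tensr; apply: eqHom_irr. Qed.

Lemma assoc_inv_nat (X X' Y Y' Z Z' : C) (f : HomC C X X') (g : HomC C Y Y')
    (h : HomC C Z Z') :
  eqHom (esym (tensA X' Y' Z')) ∘ (f ⊗ (g ⊗ h))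
  = ((f ⊗ g) ⊗ h) ∘ eqHom (esym (tensA X Y Z)).
Proof.
rewrite -(comp1m ((f ⊗ g) ⊗ h)) -(eqHomK (tensA X' Y' Z')).
by rewrite -(compmA _ (eqHom _)) assoc_nat -!compmA eqHomVK compm1.
Qed.

Lemma tensm_assocE (X X' Y Y' Z Z' : C) (f : HomC C X X') (g : HomC C Y Y')
    (h : HomC C Z Z') :
  (f ⊗ g) ⊗ h
  = eqHom (esym (tensA X' Y' Z')) ∘ (f ⊗ (g ⊗ h)) ∘ eqHom (tensA X Y Z).
Proof. by rewrite -compmA -assoc_nat compmA eqHomK comp1m. Qed.

Lemma runit_inv_nat (X Y : C) (f : HomC C X Y) :
  (f ⊗ idm tunit) ∘ eqHom (esym (tens1r X)) = eqHom (esym (tens1r Y)) ∘ f.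
Proof.
rewrite -[LHS]comp1m -(eqHomK (tens1r Y)) ?compmA (postcomp22 (runit_nat f)).
by rewrite -!compmA eqHomVK compm1.
Qed.

Lemma modhom_inv (A M N : C) (rhoM : HomC C (tens A M) M)
    (rhoN : HomC C (tens A N) N) (f : HomC C M N) (g : HomC C N M) :
  is_modhom rhoM rhoN f -> g ∘ f = idm M -> f ∘ g = idm N -> is_modhom rhoN rhoM g.
Proof.
rewrite /is_modhom => f_lin gf fg.
rewrite -[LHS]compm1 -(tensm1 A N) -fg tensm_compr compmA -(compmA g rhoN).
by rewrite -f_lin compmA gf comp1m.
Qed.

End StrictTensorCategory.

Section Duality.
Variables (C : stcat) (D : rduality C).
Hypotheses (HC : is_stcat C) (HD : is_rduality D).

Definition mate (A X : C) (g : HomC C (tens X A) tunit) : HomC C X (dualo D A) :=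
  eqHom (tens1l (dualo D A)) ∘ (g ⊗ idm (dualo D A))
    ∘ eqHom (esym (tensA X A (dualo D A)))
    ∘ (idm X ⊗ coev D A) ∘ eqHom (esym (tens1r X)).

Definition comate (A X : C) (u : HomC C tunit (tens A X)) : HomC C (dualo D A) X :=
  eqHom (tens1l X) ∘ (ev D A ⊗ idm X) ∘ eqHom (esym (tensA (dualo D A) A X))
    ∘ (idm (dualo D A) ⊗ u) ∘ eqHom (esym (tens1r (dualo D A))).

Lemma zigzag_tensl (A X W : C)
    (e1 : tens (tens X A) tunit = tens X A)
    (e2 : tens (tens X (tens A (dualo D A))) A = tens (tens X A) (tens (dualo D A) A))
    (e3 : tens X A = tens (tens X tunit) A) (k : HomC C (tens X A) W) :
  k ∘ eqHom e1 ∘ (idm (tens X A) ⊗ ev D A) ∘ eqHom e2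
    ∘ ((idm X ⊗ coev D A) ⊗ idm A) ∘ eqHom e3 = k.
Proof.
rewrite -{1}(tensm1 HC X A) (tensm_assocE HC (idm X) (idm A) (ev D A)).
rewrite ?(compmA HC) ?(eqHom_transl HC).
rewrite (eqHom_split HC _ (tensA X (tens A (dualo D A)) A)
           (f_equal (tens X) (tensA A (dualo D A) A))).
rewrite ?(compmA HC) (postcomp22 HC (assoc_nat HC (idm X) (coev D A) (idm A))).
rewrite ?(compmA HC) ?(eqHom_transl HC).
rewrite (eqHom_tensrE HC _ (tens1r A)) (eqHom_tensrE HC _ (esym (tens1l A))).
rewrite -(eqHom_tensr HC) -!(compmA HC) -!(tensm_compr HC) ?(compmA HC).
by rewrite (proj1 (HD A)) (tensm1 HC) (compm1 HC).
Qed.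

Lemma ev_mate (A X : C) (g : HomC C (tens X A) tunit) :
  ev D A ∘ (mate g ⊗ idm A) = g.
Proof.
rewrite /mate !(tensm_compl HC) !(eqHom_tensl HC) ?(compmA HC).
rewrite (eqHom_split HC _ (tensA tunit (dualo D A) A) (tens1l (tens (dualo D A) A))).
rewrite ?(compmA HC) -(lunit_nat HC (ev D A)) ?(compmA HC).
rewrite (postcomp22 HC (assoc_nat HC g (idm _) (idm A))) ?(compmA HC).
rewrite (tensm1 HC (dualo D A) A) (postcomp2 HC (tensm_factor_rl HC g (ev D A))).
rewrite -(tensm_factor_lr HC g (ev D A)) ?(compmA HC).
rewrite (eqHom_irr (tens1l tunit) (tens1r tunit)) (runit_nat HC g) ?(compmA HC).
by rewrite ?(eqHom_transl HC) zigzag_tensl.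
Qed.

Lemma mate_ev (A X : C) (f : HomC C X (dualo D A)) :
  mate (ev D A ∘ (f ⊗ idm A)) = f.
Proof.
rewrite /mate (tensm_compl HC) ?(compmA HC).
rewrite -(postcomp22 HC (assoc_inv_nat HC f (idm A) (idm (dualo D A)))) ?(compmA HC).
rewrite (tensm1 HC A (dualo D A)) (postcomp2 HC (tensm_factor_lr HC f (coev D A))).
rewrite -(tensm_factor_rl HC f (coev D A)) ?(compmA HC).
by rewrite (postcomp22 HC (runit_inv_nat HC f)) ?(compmA HC) (proj2 (HD A)) comp1m.
Qed.

Lemma mate_comp (A X Y : C) (g : HomC C (tens X A) tunit) (h : HomC C Y X) :
  mate g ∘ h = mate (g ∘ (h ⊗ idm A)).
Proof.
rewrite /mate -(postcomp22 HC (runit_inv_nat HC h)) ?(compmA HC).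
rewrite (postcomp2 HC (tensm_factor_rl HC h (coev D A))).
rewrite -(tensm_factor_lr HC h (coev D A)) ?(compmA HC) -(tensm1 HC A (dualo D A)).
rewrite (postcomp22 HC (assoc_inv_nat HC h (idm A) (idm (dualo D A)))) ?(compmA HC).
by rewrite (postcomp2 HC (esym (tensm_compl HC _ _ _))).
Qed.

Lemma comate_mate (A X Y : C) (u : HomC C tunit (tens A X))
    (g : HomC C (tens Y A) tunit) :
  comate u ∘ mate g = eqHom (tens1l X) ∘ (g ⊗ idm X) ∘ eqHom (esym (tensA Y A X))
    ∘ (idm Y ⊗ u) ∘ eqHom (esym (tens1r Y)).
Proof.
rewrite /comate -(postcomp22 HC (runit_inv_nat HC (mate g))) ?(compmA HC).
rewrite (postcomp2 HC (tensm_factor_rl HC (mate g) u)).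
rewrite -(tensm_factor_lr HC (mate g) u) ?(compmA HC) -(tensm1 HC A X).
rewrite (postcomp22 HC (assoc_inv_nat HC (mate g) (idm A) (idm X))) ?(compmA HC).
by rewrite (postcomp2 HC (esym (tensm_compl HC _ _ _))) ev_mate.
Qed.

Lemma comp_comate_tensl (A X : C) (u : HomC C tunit (tens A X))
    (g : HomC C (tens X A) tunit) :
  g ∘ (comate u ⊗ idm A)
  = ev D A ∘ (idm (dualo D A) ⊗ (eqHom (tens1r A) ∘ (idm A ⊗ g)
      ∘ eqHom (tensA A X A) ∘ (u ⊗ idm A) ∘ eqHom (esym (tens1l A)))).
Proof.
rewrite /comate !(tensm_compl HC) !(eqHom_tensl HC) ?(compmA HC).
rewrite (eqHom_split HC _ (tensA tunit X A) (tens1l (tens X A))) ?(compmA HC).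
rewrite -(lunit_nat HC g) ?(compmA HC).
rewrite (postcomp22 HC (assoc_nat HC (ev D A) (idm X) (idm A))) ?(compmA HC).
rewrite (tensm1 HC X A) (postcomp2 HC (tensm_factor_rl HC (ev D A) g)).
rewrite -(tensm_factor_lr HC (ev D A) g) ?(compmA HC).
rewrite (eqHom_irr (tens1l tunit) (tens1r tunit)) (runit_nat HC (ev D A)).
rewrite ?(compmA HC) ?(eqHom_transl HC).
rewrite -{1}(tensm1 HC (dualo D A) A) (tensm_assocE HC (idm (dualo D A)) (idm A) g).
rewrite ?(compmA HC) ?(eqHom_trans HC) ?(eqHom_transl HC).
rewrite (eqHom_split HC _ (tensA (dualo D A) (tens A X) A)
           (f_equal (tens (dualo D A)) (tensA A X A))).
rewrite ?(compmA HC) (postcomp22 HC (assoc_nat HC (idm (dualo D A)) u (idm A))).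
rewrite ?(compmA HC) ?(eqHom_transl HC).
rewrite (eqHom_tensrE HC _ (tens1r A)) (eqHom_tensrE HC _ (esym (tens1l A))).
rewrite -(eqHom_tensr HC).
by do 4 rewrite (postcomp2 HC (esym (tensm_compr HC _ _ _))); rewrite !(compmA HC).
Qed.

Lemma mate_comateK (A X : C) (g : HomC C (tens X A) tunit)
    (u : HomC C tunit (tens A X)) :
  eqHom (tens1l X) ∘ (g ⊗ idm X) ∘ eqHom (esym (tensA X A X))
    ∘ (idm X ⊗ u) ∘ eqHom (esym (tens1r X)) = idm X ->
  eqHom (tens1r A) ∘ (idm A ⊗ g) ∘ eqHom (tensA A X A) ∘ (u ⊗ idm A)
    ∘ eqHom (esym (tens1l A)) = idm A ->
  comate u ∘ mate g = idm X /\ mate g ∘ comate u = idm (dualo D A).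
Proof.
move=> snake_X snake_A; split; first by rewrite comate_mate.
by rewrite mate_comp comp_comate_tensl snake_A mate_ev.
Qed.

End Duality.

Section Modules.
Variables (C : stcat) (D : rduality C).
Hypothesis HC : is_stcat C.
Variables (A : C) (m : HomC C (tens A A) A) (eta : HomC C tunit A).
Variables (c : forall X : C, HomC C (tens X A) (tens A X))
          (cinv : forall X : C, HomC C (tens A X) (tens X A)).
Hypothesis Hswap : is_Aswap m eta c cinv.

Lemma Aswap_inv_nat (X Y : C) (f : HomC C X Y) (g : HomC C A A) :
  cinv Y ∘ (g ⊗ f) = (f ⊗ g) ∘ cinv X.
Proof.
case: Hswap => Hinv _ _ _ Hnat.
rewrite -[LHS](compm1 HC) -(proj2 (Hinv X)) ?(compmA HC).
by rewrite -(postcomp22 HC (Hnat X Y f g)) (proj1 (Hinv Y)) (comp1m HC).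
Qed.

Lemma swap_commutative_inv : swap_commutative m c -> m ∘ cinv A = m.
Proof.
case: Hswap => Hinv _ _ _ _ Hcomm.
by rewrite -{1}Hcomm -(compmA HC) (proj2 (Hinv A)) (compm1 HC).
Qed.

Lemma dual_act_mate (M : C) (rho : HomC C (tens A M) M) :
  dual_act D cinv rho
  = mate D (ev D M ∘ (idm (dualo D M) ⊗ rho) ∘ eqHom (tensA (dualo D M) A M)
              ∘ (cinv (dualo D M) ⊗ idm M)).
Proof.
rewrite /dual_act /mate !(tensm_compl HC) (eqHom_tensl HC) ?(compmA HC).
rewrite -(postcomp22 HC (assoc_inv_nat HC (cinv _) (idm M) (idm _))).
rewrite (tensm1 HC M (dualo D M)) (postcomp2 HC (tensm_factor_lr HC _ _)).
rewrite ?(compmA HC) ?(eqHom_transl HC).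
by congr (_ ∘ _ ∘ _ ∘ _); apply: eqHom_irr.
Qed.

End Modules.

Section FrobeniusSelfDual.
Variables (C : stcat) (D : rduality C).
Hypotheses (HC : is_stcat C) (HD : is_rduality D).
Variables (A : C) (m : HomC C (tens A A) A) (eta : HomC C tunit A)
          (Delta : HomC C A (tens A A)) (eps : HomC C A tunit).
Hypothesis HF : is_frobenius m eta Delta eps.

Lemma frobenius_zigzag_l :
  eqHom (tens1l A) ∘ ((eps ∘ m) ⊗ idm A) ∘ eqHom (esym (tensA A A A))
    ∘ (idm A ⊗ (Delta ∘ eta)) ∘ eqHom (esym (tens1r A)) = idm A.
Proof.
case: HF => [[_ unit_r _] [_ _ counit_l] _ frob_r].
rewrite (tensm_compl HC) (tensm_compr HC) ?(compmA HC).
by rewrite (postcomp3 HC (esym frob_r)) ?(compmA HC) counit_l (comp1m HC).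
Qed.

Lemma frobenius_zigzag_r :
  eqHom (tens1r A) ∘ (idm A ⊗ (eps ∘ m)) ∘ eqHom (tensA A A A)
    ∘ ((Delta ∘ eta) ⊗ idm A) ∘ eqHom (esym (tens1l A)) = idm A.
Proof.
case: HF => [[_ _ unit_l] [_ counit_r _] frob_l _].
rewrite (tensm_compr HC) (tensm_compl HC) ?(compmA HC).
by rewrite (postcomp3 HC frob_l) ?(compmA HC) counit_r (comp1m HC).
Qed.

Lemma Phi_mate : Phi D m eps = mate D (eps ∘ m).
Proof. by rewrite /Phi /mate (tensm_compl HC) !(compmA HC). Qed.

Variables (c : forall X : C, HomC C (tens X A) (tens A X))
          (cinv : forall X : C, HomC C (tens A X) (tens X A)).
Hypotheses (Hswap : is_Aswap m eta c cinv) (Hcomm : swap_commutative m c).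

Lemma Phi_modhom : is_modhom m (dual_act D cinv m) (Phi D m eps).
Proof.
case: HF => [[m_assoc _ _] _ _ _].
rewrite /is_modhom (dual_act_mate _ HC) Phi_mate !(mate_comp _ HC); congr (mate D _).
rewrite (postcomp2 HC (esym (tensm_compl HC _ _ _))).
rewrite (Aswap_inv_nat HC Hswap) (tensm_compl HC) ?(compmA HC).
rewrite (postcomp22 HC (assoc_nat HC _ (idm A) (idm A))) (tensm1 HC A A).
rewrite (postcomp2 HC (tensm_factor_rl HC _ _)) -(tensm_factor_lr HC _ m).
rewrite ?(compmA HC) (ev_mate HC HD) ?(compmA HC) (postcomp3 HC m_assoc).
rewrite ?(compmA HC) (postcomp2 HC (esym (tensm_compl HC _ _ _))).
by rewrite (swap_commutative_inv HC Hswap Hcomm).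
Qed.

End FrobeniusSelfDual.

Theorem mainTheorem16 (C : stcat) (HC : is_stcat C) (Hab : is_abelian C)
    (Hk : tensor_k_additive C)
    (D : rduality C) (HD : is_rduality D)
    (A : C) (m : HomC C (tens A A) A) (eta : HomC C tunit A)
    (Delta : HomC C A (tens A A)) (eps : HomC C A tunit)
    (HF : is_frobenius m eta Delta eps)
    (c : forall X : C, HomC C (tens X A) (tens A X))
    (cinv : forall X : C, HomC C (tens A X) (tens X A))
    (Hswap : is_Aswap m eta c cinv)
    (Hcomm : swap_commutative m c) :
  is_modhom m (dual_act D cinv m) (Phi D m eps) /\
  exists Psi : HomC C (dualo D A) A,
    is_modhom (dual_act D cinv m) m Psi /\
    Psi ∘ Phi D m eps = idm A /\
    Phi D m eps ∘ Psi = idm (dualo D A).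
Proof.
have Phi_lin := Phi_modhom HC HD HF Hswap Hcomm.
have [PsiPhi PhiPsi] : comate D (Delta ∘ eta) ∘ Phi D m eps = idm A
                       /\ Phi D m eps ∘ comate D (Delta ∘ eta) = idm (dualo D A).
  rewrite (Phi_mate _ HC); apply: (mate_comateK HC HD).
  - exact: frobenius_zigzag_l.
  - exact: frobenius_zigzag_r.
split=> //; exists (comate D (Delta ∘ eta)); split=> //.
exact: modhom_inv Phi_lin PsiPhi PhiPsi.
Qed.
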